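(* Let $\mathcal{L}$ be a horizontal segment $EF$ of length $1$ in the plane, and let $\mathcal{T}$ be an equilateral triangle (the convex hull of a V-shaped unit worm) with side length $\frac12$ and vertices $P,Q,R$ in counterclockwise order, labelled so that, with $O_2$ its centroid, $P=O_2+\frac{\sqrt3}{6}(\cos\beta,\sin\beta)$ for some $\beta\in[\frac{\pi}{6},\frac{5\pi}{6})$. Then $$\mu(\mathcal{L},\mathcal{T})\geq \tfrac14\max\Bigl\{\sin\bigl(\beta-\tfrac{\pi}{6}\bigr),\ \sin\bigl(\beta+\tfrac{\pi}{6}\bigr)\Bigr\}.$$
   Context: $\mu(K_1,\dots,K_n)$ denotes the area of the convex hull of $K_1\cup\dots\cup K_n$. (With this labelling, $\overrightarrow{QP}$ has argument $\beta-\frac{\pi}{6}$ and $\overrightarrow{RP}$ has argument $\beta+\frac{\pi}{6}$.) *)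

From HB Require Import structures.
From mathcomp Require Import all_boot all_order all_algebra.
From mathcomp Require Import all_classical all_reals all_analysis.
Set Implicit Arguments. Unset Strict Implicit. Unset Printing Implicit Defensive.
Import Order.TTheory GRing.Theory Num.Theory.
Local Open Scope classical_set_scope.
Local Open Scope ring_scope.

Section Plane.
Variable R : realType.

Definition convex_set2 (C : set (R * R)) : Prop :=
  forall (x y : R * R) (t : R), C x -> C y -> 0 <= t <= 1 ->
    C (t * x.1 + (1 - t) * y.1, t * x.2 + (1 - t) * y.2).

Definition conv_hull (A : set (R * R)) : set (R * R) :=
  [set p | forall C, A `<=` C -> convex_set2 C -> C p].

Definition area (A : set (R * R)) : \bar R :=
  ((@lebesgue_measure R) \x (@lebesgue_measure R))%E A.

Definition mu2 (K1 K2 : set (R * R)) : \bar R := area (conv_hull (K1 `|` K2)).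

End Plane.

(** A convex set [H] containing a horizontal segment of length [w] contains
    the triangle spanned by the segment and any of its points.  For a point [X]
    above the segment's line and a point [Y] below it, the two triangles meet
    only along the segment, so the area of [H] is at least
    [w * (X.2 - Y.2) / 2]; a point on the wrong side of the line can be
    replaced by an endpoint of the segment, which only enlarges the gap.
    For the triangle [PQR] the gaps [P.2 - Q.2] and [P.2 - R.2] are
    [sin (beta - pi/6) / 2] and [sin (beta + pi/6) / 2], and [w = 1]. *)
From HB Require Import structures.
From mathcomp Require Import all_boot all_order all_algebra.
From mathcomp Require Import all_classical all_reals all_analysis.
From mathcomp Require Import measurable_realfun ring lra.
Set Implicit Arguments. Unset Strict Implicit. Unset Printing Implicit Defensive.
Import Order.TTheory GRing.Theory Num.Theory.
Import numFieldNormedType.Exports.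
Local Open Scope classical_set_scope.
Local Open Scope ring_scope.

Section Plane.
Variable R : realType.

Lemma sub_conv_hull (A : set (R * R)) : A `<=` conv_hull A.
Proof. by move=> p Ap K AK _; exact: AK. Qed.

Lemma convex_conv_hull (A : set (R * R)) : convex_set2 (conv_hull A).
Proof. by move=> x y t hx hy t01 K AK cK; exact: cK (hx K AK cK) (hy K AK cK) t01. Qed.

Section Area.
Local Open Scope ereal_scope.

(* [area] is monotone on all sets, since x-sections are measured by the outer
   Lebesgue measure. *)
Lemma le_area (A B : set (R * R)) : A `<=` B -> area A <= area B.
Proof.
move=> AB; rewrite /area /product_measure1 !ge0_integralTE //.
apply: ereal_sup_le => _ [h /= hf <-]; exists h => //= x.
apply: le_trans (hf x) _; apply: le_mu_ext => y.
by rewrite /xsection /= !inE; exact: AB.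
Qed.

Lemma area_ysection (A : set (R * R)) : measurable A ->
  area A = \int[lebesgue_measure]_y lebesgue_measure (ysection A y).
Proof.
move=> mA; rewrite /area /product_measure1.
have := indic_fubini_tonelli lebesgue_measure lebesgue_measure mA.
by rewrite indic_fubini_tonelli_FE // indic_fubini_tonelli_GE.
Qed.

End Area.

Lemma integral_itv_affine (k c lo hi : R) : lo < hi ->
  (\int[lebesgue_measure]_(y in `[lo, hi]) (k * (c - y))%:E =
   (k * ((c - lo) ^+ 2 - (c - hi) ^+ 2) / 2)%:E)%E.
Proof.
move=> lohi; pose F y : R := - k * (c - y) ^+ 2 / 2.
have dF (y : R) : is_derive y (1 : R) F (k * (c - y)).
  by apply: is_derive_eq; rewrite !scaler0 ?subr0 ?add0r -![_ *: _]/(_ * _) /=; field.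
have derivF (y : R) : derivable F y 1 := @ex_derive _ _ _ _ _ _ _ (dF y).
rewrite (@continuous_FTC2 _ _ F) //.
- by congr (_%:E); rewrite /F; field.
- apply: continuous_subspaceT => y.
  by apply: cvgM; [exact: cvg_cst|apply: cvgB; [exact: cvg_cst|exact: cvg_id]].
- split; first by move=> y _; exact: derivF.
  + apply/cvg_at_right_filter/differentiable_continuous/derivable1_diffP; exact: derivF.
  + apply/cvg_at_left_filter/differentiable_continuous/derivable1_diffP; exact: derivF.
- by move=> y _; rewrite derive1E (@derive_val _ _ _ _ _ _ _ (dF y)).
Qed.

Lemma divr_itvoo01 (y y0 h : R) : h != 0 ->
  (0 < (y - y0) / h < 1) = (Num.min y0 (y0 + h) < y < Num.max y0 (y0 + h)).
Proof.
case: (ltgtP h 0) => [hlt|hgt|] // _.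
  have -> : Num.min y0 (y0 + h) = y0 + h by apply/min_idPr; lra.
  have -> : Num.max y0 (y0 + h) = y0 by apply/max_idPl; lra.
  rewrite ltr_ndivlMr // ltr_ndivrMr // mul0r mul1r.
  by apply/idP/idP => /andP[? ?]; apply/andP; split; lra.
have -> : Num.min y0 (y0 + h) = y0 by apply/min_idPl; lra.
have -> : Num.max y0 (y0 + h) = y0 + h by apply/max_idPr; lra.
rewrite ltr_pdivlMr // ltr_pdivrMr // mul0r mul1r.
by apply/idP/idP => /andP[? ?]; apply/andP; split; lra.
Qed.

Section Triangle.
Variables x0 y0 w : R.

(* The triangle with base [[x0, x0 + w] * {y0}] and apex [(xa, y0 + h)],
   without its base and apex; [(p.2 - y0) / h] is the relative height of [p].
   It is empty when [h = 0]. *)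
Definition triangle (xa h : R) : set (R * R) :=
  [set p | 0 < (p.2 - y0) / h < 1 /\
    x0 + (p.2 - y0) / h * (xa - x0) <= p.1 <= x0 + w + (p.2 - y0) / h * (xa - x0 - w)].

Lemma measurable_triangle xa h : measurable (triangle xa h).
Proof.
pose t (p : R * R) := (p.2 - y0) / h.
have mt : measurable_fun setT t.
  apply: measurable_funM; last exact: measurable_cst.
  by apply: measurable_funB; [exact: measurable_snd|exact: measurable_cst].
have ml : measurable_fun setT (fun p : R * R => p.1 - (x0 + t p * (xa - x0))).
  apply: measurable_funB; first exact: measurable_fst.
  by apply: measurable_funD; [exact: measurable_cst|apply: measurable_funM].
have mr : measurable_fun setT (fun p : R * R => x0 + w + t p * (xa - x0 - w) - p.1).
  apply: measurable_funB; last exact: measurable_fst.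
  by apply: measurable_funD; [exact: measurable_cst|apply: measurable_funM].
have -> : triangle xa h = t @^-1` `]0, 1[ `&`
    (fun p : R * R => p.1 - (x0 + t p * (xa - x0))) @^-1` `[0, +oo[ `&`
    (fun p : R * R => x0 + w + t p * (xa - x0 - w) - p.1) @^-1` `[0, +oo[.
  apply/seteqP; split => p /=; rewrite /triangle /t /= !in_itv /= ?andbT.
    by move=> [-> /andP[l r]]; split; [split|]; lra.
  by move=> [[-> l] r]; split => //; apply/andP; split; lra.
by apply: measurableI; [apply: measurableI|]; rewrite -[X in measurable X]setTI;
  [exact: mt|exact: ml|exact: mr].
Qed.

Lemma lebesgue_ysection_triangle xa h y : 0 <= w ->
  lebesgue_measure (ysection (triangle xa h) y) =
  if 0 < (y - y0) / h < 1 then (w * (1 - (y - y0) / h))%:E else 0%E.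
Proof.
move=> w0; set t := (y - y0) / h; case: ifPn => ht.
  have -> : ysection (triangle xa h) y =
      `[x0 + t * (xa - x0), x0 + w + t * (xa - x0 - w)]%classic.
    apply/seteqP; split => x; rewrite /ysection /= inE /triangle /= in_itv /=.
      by case.
    by split.
  rewrite lebesgue_measure_itv /= lte_fin; case: ltgtP => [_|hl|hl].
  - by congr (_%:E); ring.
  - by exfalso; move/andP: ht => [? ?]; nra.
  - by rewrite (_ : w * (1 - t) = 0) //; nra.
have -> : ysection (triangle xa h) y = set0.
  apply/seteqP; split => x //; rewrite /ysection /= inE /triangle /=.
  by move=> [H _]; move: ht; rewrite /t H.
exact: measure0.
Qed.

Lemma area_triangle xa h : 0 <= w -> area (triangle xa h) = (w * `|h| / 2)%:E.
Proof.
move=> w0; have [->|h0] := eqVneq h 0.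
  have -> : triangle xa 0 = set0.
    by apply/seteqP; split => p // [/andP[]]; rewrite invr0 mulr0 ltxx.
  by rewrite normr0 mulr0 mul0r; exact: measure0.
rewrite area_ysection; last exact: measurable_triangle.
set lo := Num.min y0 (y0 + h); set hi := Num.max y0 (y0 + h).
have lohi : lo < hi.
  by rewrite /lo /hi gt_min !lt_max ltxx ltrDl gtrDl; case: ltgtP h0.
transitivity (\int[lebesgue_measure]_(y in `]lo, hi[) (w / h * (y0 + h - y))%:E)%E.
  rewrite [RHS]integral_mkcond; apply: eq_integral => y _.
  rewrite lebesgue_ysection_triangle // patchE mem_setE in_itv /= divr_itvoo01 //.
  by case: ifP => // _; congr (_%:E); field.
rewrite -(@integral_itv_bndoo _ _ _ _ true false); last first.
  by apply/measurable_EFinP; apply: measurable_funM => //; apply: measurable_funB.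
rewrite integral_itv_affine //; congr (_%:E).
rewrite /lo /hi; case: (ltgtP h 0) h0 => // hs _.
  rewrite (min_idPr _) ?(max_idPl _) ?ltr0_norm //; try lra.
  by field; rewrite lt_eqF.
rewrite (min_idPl _) ?(max_idPr _) ?gtr0_norm //; try lra.
by field; rewrite gt_eqF.
Qed.

Lemma triangle_sub_convex (C : set (R * R)) xa h : 0 < w -> convex_set2 C ->
  C (x0, y0) -> C (x0 + w, y0) -> C (xa, y0 + h) -> triangle xa h `<=` C.
Proof.
move=> w0 cC hE hF hX [px py] [/andP[t0 t1] /andP[l1 l2]] /=.
move: t0 t1 l1 l2; rewrite /=; set t := (py - y0) / h => t0 t1 l1 l2.
have h0 : h != 0 by apply/eqP => h0; move: t0; rewrite /t h0 invr0 mulr0 ltxx.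
pose g := (px - t * xa) / (1 - t).
have gl : x0 <= g by rewrite /g ler_pdivlMr ?subr_gt0 //; lra.
have gu : g <= x0 + w by rewrite /g ler_pdivrMr ?subr_gt0 //; lra.
have hG : C (g, y0).
  pose s := (x0 + w - g) / w.
  have -> : (g, y0) = (s * (x0, y0).1 + (1 - s) * (x0 + w, y0).1,
                      s * (x0, y0).2 + (1 - s) * (x0 + w, y0).2).
    by rewrite /s /=; congr pair; field; rewrite gt_eqF.
  apply: cC => //; rewrite /s ler_pdivlMr // ler_pdivrMr //; apply/andP; split; lra.
have -> : (px, py) = (t * (xa, y0 + h).1 + (1 - t) * (g, y0).1,
                      t * (xa, y0 + h).2 + (1 - t) * (g, y0).2).
  have pyE : py = y0 + t * h by rewrite /t; field.
  by rewrite /= /g pyE; congr pair; [field; rewrite subr_eq0 gt_eqF|ring].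
by apply: cC => //; apply/andP; split; lra.
Qed.

Lemma triangle_disjoint xa xb h k : 0 <= h -> k <= 0 ->
  triangle xa h `&` triangle xb k = set0.
Proof.
move=> h0 k0; apply/seteqP; split => // p [[/andP[a _] _] [/andP[b _] _]].
move: a b; set d := p.2 - y0; case: (leP d 0) => [d0|d0] a b.
  by move: a; rewrite ltNge mulr_le0_ge0 ?invr_ge0.
by move: b; rewrite ltNge (mulr_ge0_le0 (ltW d0)) ?invr_le0.
Qed.

Local Open Scope ereal_scope.

Lemma area_convex_ge_straddle (H : set (R * R)) (X Y : R * R) :
  (0 < w)%R -> convex_set2 H -> H (x0, y0) -> H (x0 + w, y0)%R -> H X -> H Y ->
  (Y.2 <= y0 <= X.2)%R -> (w * (X.2 - Y.2) / 2)%:E <= area H.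
Proof.
move=> w0 cH hE hF hX hY /andP[Yy yX].
have apex (Z : R * R) : H Z -> H (Z.1, y0 + (Z.2 - y0))%R.
  by rewrite addrC subrK; case: Z.
set TX := triangle X.1 (X.2 - y0); set TY := triangle Y.1 (Y.2 - y0).
have sub : TX `|` TY `<=` H.
  by move=> p [] Tp; apply: triangle_sub_convex Tp => //; exact: apex.
apply: le_trans _ (le_area sub).
have -> : area (TX `|` TY) = area TX + area TY.
  rewrite /area measureU //; try exact: measurable_triangle.
  by apply: triangle_disjoint; lra.
rewrite !area_triangle ?(ltW w0) // -EFinD lee_fin ger0_norm ?ler0_norm; lra.
Qed.

Lemma area_convex_ge (H : set (R * R)) (X Y : R * R) :
  (0 < w)%R -> convex_set2 H -> H (x0, y0) -> H (x0 + w, y0)%R -> H X -> H Y ->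
  (w * (X.2 - Y.2) / 2)%:E <= area H.
Proof.
move=> w0 cH hE hF hX hY.
pose X' := if (y0 <= X.2)%R then X else (x0, y0).
pose Y' := if (Y.2 <= y0)%R then Y else (x0, y0).
apply: le_trans _ (@area_convex_ge_straddle H X' Y' w0 cH hE hF _ _ _).
- by rewrite lee_fin /X' /Y'; case: (leP y0 X.2) => ?; case: (leP Y.2 y0) => ? /=; nra.
- by rewrite /X'; case: ifP.
- by rewrite /Y'; case: ifP.
- by rewrite /X' /Y'; case: (leP y0 X.2) => ?; case: (leP Y.2 y0) => ? /=;
    apply/andP; split; lra.
Qed.

Lemma mu2_segment_ge (K : set (R * R)) (X Y : R * R) : (0 < w)%R -> K X -> K Y ->
  (w * (X.2 - Y.2) / 2)%:E <= mu2 (conv_hull [set (x0, y0); (x0 + w, y0)%R]) K.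
Proof.
move=> w0 KX KY; rewrite /mu2; set S := [set _; _].
have inH p : S p \/ K p -> conv_hull (conv_hull S `|` K) p.
  by case=> [Sp|Kp]; apply: sub_conv_hull; [left; exact: sub_conv_hull|right].
by apply: area_convex_ge w0 (@convex_conv_hull _) _ _ _ _; apply: inH;
  [left; left|left; right|right|right].
Qed.

End Triangle.

Let cos_pi6_gt0 : 0 < cos (pi / 6 : R).
Proof. by apply: cos_gt0_pihalf; have := pi_gt0 R; lra. Qed.

Lemma sin_pi6 : sin (pi / 6) = 1 / 2 :> R.
Proof.
set x := pi / 6 : R.
have s0 : 0 < sin x by apply: sin_gt0_pihalf; have := pi_gt0 R; rewrite /x; lra.
have c3 : cos (x + (x + x)) = 0 by rewrite -cos_pihalf /x; congr cos; field.
rewrite !cosD !sinD in c3.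
have c2 : cos x ^+ 2 - 3 * sin x ^+ 2 = 0.
  have /eqP : cos x * (cos x ^+ 2 - 3 * sin x ^+ 2) = 0 by rewrite -c3; ring.
  by rewrite mulf_eq0 gt_eqF //= => /eqP.
have := cos2Dsin2 x; nra.
Qed.

Lemma cos_pi6 : cos (pi / 6) = Num.sqrt 3 / 2 :> R.
Proof.
have r2 : Num.sqrt (3 : R) ^+ 2 = 3 by rewrite sqr_sqrtr.
have := cos2Dsin2 (pi / 6 : R); have := sqrtr_ge0 (3 : R).
rewrite sin_pi6; have := cos_pi6_gt0; nra.
Qed.

Lemma sinD2pi3 (x : R) : sin (x + 2 * pi / 3) = cos (x + pi / 6).
Proof. by rewrite -sinDpihalf; congr sin; field. Qed.

Lemma sinD4pi3 (x : R) : sin (x + 4 * pi / 3) = - cos (x - pi / 6).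
Proof. by rewrite -cosDpi -sinDpihalf; congr sin; field. Qed.

Lemma sqrt3_sin_sub_sinD2pi3 (x : R) :
  Num.sqrt 3 / 6 * sin x - Num.sqrt 3 / 6 * sin (x + 2 * pi / 3) = sin (x - pi / 6) / 2.
Proof.
have r2 : Num.sqrt 3 ^+ 2 * cos x = 3 * cos x by rewrite sqr_sqrtr.
rewrite sinD2pi3 cosD sinB cos_pi6 sin_pi6; lra.
Qed.

Lemma sqrt3_sin_sub_sinD4pi3 (x : R) :
  Num.sqrt 3 / 6 * sin x - Num.sqrt 3 / 6 * sin (x + 4 * pi / 3) = sin (x + pi / 6) / 2.
Proof.
have r2 : Num.sqrt 3 ^+ 2 * cos x = 3 * cos x by rewrite sqr_sqrtr.
rewrite sinD4pi3 cosB sinD cos_pi6 sin_pi6; lra.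
Qed.

End Plane.

Theorem mainTheorem6 (R : realType) (x0 y0 a b beta : R) :
  pi / 6 <= beta < 5 * pi / 6 ->
  let E := (x0, y0) in
  let F := (x0 + 1, y0) in
  let rho := Num.sqrt 3 / 6 in
  let P := (a + rho * cos beta, b + rho * sin beta) in
  let Q := (a + rho * cos (beta + 2 * pi / 3), b + rho * sin (beta + 2 * pi / 3)) in
  let Rv := (a + rho * cos (beta + 4 * pi / 3), b + rho * sin (beta + 4 * pi / 3)) in
  let L := conv_hull [set E; F] in
  let T := conv_hull [set P; Q; Rv] in
  ((1 / 4 * Num.max (sin (beta - pi / 6)) (sin (beta + pi / 6)))%:E
     <= mu2 L T)%E.
Proof.
move=> _ /=.
set P := (_ + _ * cos beta, _); set Q := (_ + _ * cos (beta + 2 * pi / 3), _).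
set Rv := (_ + _ * cos (beta + 4 * pi / 3), _).
have inT p : [set P; Q; Rv] p -> conv_hull [set P; Q; Rv] p := @sub_conv_hull _ _ p.
have dPQ := sqrt3_sin_sub_sinD2pi3 beta; have dPR := sqrt3_sin_sub_sinD4pi3 beta.
rewrite maxEle; case: ifP => _.
  apply: le_trans _ (mu2_segment_ge x0 y0 ltr01 (inT P _) (inT Rv _)).
  - by rewrite lee_fin /=; lra.
  - by left; left.
  - by right.
apply: le_trans _ (mu2_segment_ge x0 y0 ltr01 (inT P _) (inT Q _)).
- by rewrite lee_fin /=; lra.
- by left; left.
- by left; right.
Qed.
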